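(* Let $n\ge2$ and let $P_X$ be a probability distribution on $[0,1]$ with $P_X((0,1))>0$. Let $q_y:=\int\binom{n}{y}x^y(1-x)^{n-y}\,dP_X(x)$, $y=0,\dots,n$, be the induced output pmf. Then $q_y>0$ for all $y$, and for every $y\in\{1,\dots,n-1\}$, \[ \frac{q_{y+1}\,q_{y-1}}{q_y^2}\ \ge\ \frac{y(n-y)}{(y+1)(n-y+1)}. \] *)

From HB Require Import structures.
From mathcomp Require Import all_boot all_order all_algebra.
From mathcomp Require Import all_classical all_reals all_analysis.
Set Implicit Arguments. Unset Strict Implicit. Unset Printing Implicit Defensive.
Import Order.TTheory GRing.Theory Num.Theory.
Local Open Scope ring_scope.
Local Open Scope classical_set_scope.

Definition binom_kernel (R : realType) (n y : nat) (x : R) : R :=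
  ('C(n, y))%:R * x ^+ y * (1 - x) ^+ (n - y).

Definition out_pmf (R : realType) (P : probability R R) (n y : nat) : R :=
  Rintegral P `[0%R, 1%R] (binom_kernel n y).

From HB Require Import structures.
From mathcomp Require Import all_boot all_order all_algebra.
From mathcomp Require Import all_classical all_reals all_analysis.
From mathcomp Require Import ring zify.
Set Implicit Arguments.
Unset Strict Implicit.
Unset Printing Implicit Defensive.

Import Order.TTheory GRing.Theory Num.Theory.
Local Open Scope ring_scope.
Local Open Scope classical_set_scope.

(* Write q_y = C(n,y) m(y, n-y) with m(a,b) the integral of x^a (1-x)^b over
   [0,1].  Each m(a,b) is positive since its integrand is positive on (0,1),
   which has positive mass.  With A = m(a+2,b), B = m(a+1,b+1), C = m(a,b+2),
   integrating x^a (1-x)^b (B x - A (1-x))^2 >= 0 gives A (A C - B^2) >= 0,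
   i.e. the Cauchy-Schwarz inequality B^2 <= A C.  The binomial coefficients
   contribute exactly the factor y(n-y)/((y+1)(n-y+1)), because
   C(n,y+1) C(n,y-1) (y+1)(n-y+1) = C(n,y)^2 y(n-y). *)

Lemma Rintegral_gt0 d (T : measurableType d) (R : realType)
    (mu : {measure set T -> \bar R}) (D E : set T) (f : T -> R) :
  measurable D -> measurable E -> D `<=` E ->
  mu.-integrable E (EFin \o f) ->
  (forall x, E x -> 0 <= f x) -> (forall x, D x -> 0 < f x) ->
  (0 < mu D)%E -> 0 < Rintegral mu E f.
Proof.
move=> mD mE DE intf f_ge0 f_gt0 muD_gt0.
rewrite lt0r Rintegral_ge0 // andbT; apply/eqP => intf0.
have absf0 : (\int[mu]_(x in E) `|(EFin \o f) x| = 0)%E.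
  rewrite -[RHS]/(0%:E) -intf0 /Rintegral fineK; last exact: integrable_fin_num.
  by apply: eq_integral => x /[!inE] Ex; rewrite /= ger0_norm ?f_ge0.
have [N [mN muN0 fN]] :=
  (ae_eq_integral_abs mu mE (measurable_int mu intf)).1 absf0.
have : (mu D <= mu N)%E.
  apply: le_measure; rewrite ?inE // => x Dx; apply: fN => /(_ (DE _ Dx)) /eqP.
  by rewrite /cst eqe gt_eqF ?f_gt0.
by rewrite muN0 leNgt muD_gt0.
Qed.

Section mean_XMonemX.
Context {R : realType} (P : probability R R).

Definition mean_XMonemX (a b : nat) : R := Rintegral P `[0%R, 1%R] (XMonemX a b).

Lemma prob_integrable_XMonemX a b :
  P.-integrable `[0%R, 1%R] (EFin \o XMonemX a b).
Proof.
apply: measurable_bounded_integrable => //; last exact: bounded_XMonemX.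
- by rewrite (le_lt_trans (probability_le1 _ _)) ?ltry.
- exact: measurable_XMonemX.
Qed.

Lemma prob_integrable_XMonemXZ c a b :
  P.-integrable `[0%R, 1%R] (EFin \o (fun x => c * XMonemX a b x)).
Proof. exact: integrableZl (prob_integrable_XMonemX a b). Qed.

Lemma prob_integrable_XMonemXZB c a b c' a' b' : P.-integrable `[0%R, 1%R]
  (EFin \o (fun x => c * XMonemX a b x - c' * XMonemX a' b' x)).
Proof.
by apply: eq_integrable (integrableB _ (prob_integrable_XMonemXZ c a b)
  (prob_integrable_XMonemXZ c' a' b')).
Qed.

Hypothesis P_itv_oo_gt0 : (0 < P `]0%R, 1%R[)%E.

Lemma mean_XMonemX_gt0 a b : 0 < mean_XMonemX a b.
Proof.
apply: Rintegral_gt0 P_itv_oo_gt0 => //.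
- exact/subset_itvP/subset_itv_oo_cc.
- exact: prob_integrable_XMonemX.
- by move=> x x01; exact: XMonemX_ge0.
- move=> x; rewrite /= in_itv /= => /andP[x_gt0 x_lt1].
  by rewrite /XMonemX mulr_gt0 ?exprn_gt0 // subr_gt0.
Qed.

Lemma mean_XMonemX_sqr_le a b :
  mean_XMonemX a.+1 b.+1 ^+ 2 <= mean_XMonemX a.+2 b * mean_XMonemX a b.+2.
Proof.
set A := mean_XMonemX a.+2 b; set B := mean_XMonemX a.+1 b.+1.
set C := mean_XMonemX a b.+2.
have sqr_expand x : XMonemX a b x * (B * x - A * (1 - x)) ^+ 2 =
    B ^+ 2 * XMonemX a.+2 b x - 2 * A * B * XMonemX a.+1 b.+1 x
    + A ^+ 2 * XMonemX a b.+2 x.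
  by rewrite /XMonemX /unstable.onem !exprS; ring.
have : 0 <= A * (A * C - B ^+ 2).
  have -> : A * (A * C - B ^+ 2) = Rintegral P `[0%R, 1%R]
      (fun x => XMonemX a b x * (B * x - A * (1 - x)) ^+ 2).
  { under eq_Rintegral do rewrite sqr_expand.
    rewrite RintegralD ?RintegralB ?RintegralZl //.
    - by rewrite /A /B /C /mean_XMonemX; ring.
    all: exact: prob_integrable_XMonemX || exact: prob_integrable_XMonemXZ
      || exact: prob_integrable_XMonemXZB. }
  apply: Rintegral_ge0 => x x01.
  by rewrite mulr_ge0 ?sqr_ge0 //; exact: XMonemX_ge0.
by rewrite pmulr_rge0 ?subr_ge0 // mean_XMonemX_gt0.
Qed.

End mean_XMonemX.

Lemma mul_bin_succ_pred n y : (0 < y < n)%N ->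
  ('C(n, y.+1) * 'C(n, y.-1) * ((y + 1) * (n - y + 1)) =
   'C(n, y) ^ 2 * (y * (n - y)))%N.
Proof.
case: y => // k /andP[_ k_lt] /=.
move: (mul_bin_left n k.+1) (mul_bin_left n k); nia.
Qed.

Lemma out_pmf_mean (R : realType) (P : probability R R) n y :
  out_pmf P n y = 'C(n, y)%:R * mean_XMonemX P y (n - y).
Proof.
rewrite /out_pmf /mean_XMonemX -RintegralZl //; last exact: prob_integrable_XMonemX.
by apply: eq_Rintegral => x _; rewrite /binom_kernel /XMonemX mulrA.
Qed.

Lemma out_pmf_sqr_le (R : realType) (P : probability R R) n y :
  (0 < P `]0%R, 1%R[)%E -> (0 < y < n)%N ->
  out_pmf P n y ^+ 2 * (y * (n - y))%:R <=
  out_pmf P n y.+1 * out_pmf P n y.-1 * ((y + 1) * (n - y + 1))%:R.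
Proof.
move=> P_itv_oo_gt0 y_bnd.
rewrite !out_pmf_mean exprMn mulrAC [in X in _ <= X]mulrACA [X in _ <= X]mulrAC.
rewrite -!natrM mul_bin_succ_pred // [in X in _ <= X]natrM natrX ler_wpM2l //.
case: y y_bnd => // k /andP[_ k_lt] /=.
rewrite (_ : n - k.+1 = (n - k.+2).+1)%N; last lia.
rewrite (_ : n - k = (n - k.+2).+2)%N; last lia.
exact: mean_XMonemX_sqr_le.
Qed.

Theorem mainTheorem13 (R : realType) (n : nat) (hn : (2 <= n)%N)
  (P : probability R R)
  (hsupp : P `[0%R, 1%R] = 1%E)
  (hint : (0 < P `]0%R, 1%R[)%E) :
  (forall y : nat, (y <= n)%N -> 0 < out_pmf P n y) /\
  (forall y : nat, (1 <= y)%N -> (y <= n - 1)%N ->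
     (y * (n - y))%:R / ((y + 1) * (n - y + 1))%:R
       <= out_pmf P n y.+1 * out_pmf P n y.-1 / out_pmf P n y ^+ 2).
Proof.
have out_pmf_gt0 y : (y <= n)%N -> 0 < out_pmf P n y.
  by move=> y_le; rewrite out_pmf_mean mulr_gt0 ?mean_XMonemX_gt0 // ltr0n bin_gt0.
split=> // y y_gt0 y_le.
have y_lt : (y < n)%N by lia.
have q_gt0 := out_pmf_gt0 y (ltnW y_lt).
have L_gt0 : 0 < ((y + 1) * (n - y + 1))%:R :> R.
  by rewrite ltr0n muln_gt0 !addn1.
rewrite ler_pdivrMr // mulrAC ler_pdivlMr ?exprn_gt0 //.
by rewrite [X in X <= _]mulrC out_pmf_sqr_le // y_gt0.
Qed.
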